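(* Let $n\in\mathbb{Z}$, let $\beta:\mathbb{Z}\to\mathbb{C}$ have convergent increments, and let $d:\mathcal{A}\to A$ be the $n$-covariant derivation $d(a)=[U^n\beta(\mathbb{K}),a]$. Then $d$ is approximately inner if and only if $\beta(k+1)-\beta(k)\to0$ as $k\to\pm\infty$.
   Context: Let $\{E_k\}$ be the canonical basis of $\ell^2(\mathbb{Z})$, $UE_k=E_{k+1}$, $\mathbb{K}E_k=kE_k$, $a(\mathbb{K})E_k=a(k)E_k$. $A$ is the C$^*$-algebra generated by $U$ and all $a(\mathbb{K})$ with $a$ having finite limits at $\pm\infty$; $\mathcal{A}$ is the algebra of finite sums $\sum_mU^ma_m(\mathbb{K})$ with each $a_m$ eventually constant (constant on $k\ge k_0$ and on $k\le-k_0$ for some $k_0$). A function $\beta$ has convergent increments if $k\mapsto\beta(k)-\beta(k-1)$ has finite limits as $k\to\pm\infty$ (this guarantees $d$ maps $\mathcal{A}$ into $A$). A derivation $d:\mathcal{A}\to A$ is approximately inner if there are $x_j\in A$ with $d(a)=\lim_j[x_j,a]$ in norm for all $a\in\mathcal{A}$. *)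

From Stdlib Require Import Reals ZArith List.
From Coquelicot Require Import Coquelicot.
Open Scope R_scope.

(* Vectors: functions Z -> C; the Hilbert space l^2(Z) is the set of square-summable ones.
   Coordinate k of x is <x, E_k>. *)
Definition vec := Z -> C.

(* sum over Z of |x k|^2, enumerated as k = 0,1,2,... and k = -1,-2,... *)
Definition sq_terms (x : vec) (n : nat) : R :=
  (Cmod (x (Z.of_nat n)))^2 + (Cmod (x (- Z.of_nat n - 1)%Z))^2.

Definition l2 (x : vec) : Prop := ex_series (sq_terms x).
Definition vnorm (x : vec) : R := sqrt (Series (sq_terms x)).

Definition op := vec -> vec.

Definition op_sub (S T : op) : op := fun x k => Cminus (S x k) (T x k).
Definition op_add (S T : op) : op := fun x k => Cplus (S x k) (T x k).
Definition op_scal (c : C) (T : op) : op := fun x k => Cmult c (T x k).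
Definition op_comp (S T : op) : op := fun x => S (T x).
Definition commutator (S T : op) : op := op_sub (op_comp S T) (op_comp T S).

Definition opdist_le (T : op) (c : R) : Prop :=
  forall x, l2 x -> l2 (T x) /\ vnorm (T x) <= c * vnorm x.

(* The bilateral shift U E_k = E_{k+1}, i.e. (U x)(k) = x(k-1), and its inverse. *)
Definition Ushift : op := fun x k => x (k - 1)%Z.
Definition Ushift_inv : op := fun x k => x (k + 1)%Z.

(* a(K) E_k = a(k) E_k *)
Definition mult_op (a : Z -> C) : op := fun x k => Cmult (a k) (x k).

(* U^m a(K): E_k |-> a(k) E_{k+m}, i.e. (U^m a(K) x)(k) = a(k-m) x(k-m). *)
Definition Upow_mult (m : Z) (a : Z -> C) : op :=
  fun x k => Cmult (a (k - m)%Z) (x (k - m)%Z).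

Definition has_limits_pm (a : Z -> C) : Prop :=
  (exists Lp : C, forall eps, 0 < eps -> exists N : Z,
      forall k, (N <= k)%Z -> Cmod (Cminus (a k) Lp) < eps) /\
  (exists Lm : C, forall eps, 0 < eps -> exists N : Z,
      forall k, (k <= N)%Z -> Cmod (Cminus (a k) Lm) < eps).

Definition eventually_const (a : Z -> C) : Prop :=
  exists k0 : Z, (forall k, (k0 <= k)%Z -> a k = a k0) /\
                 (forall k, (k <= - k0)%Z -> a k = a (- k0)%Z).

Definition closed_alg (S : op -> Prop) : Prop :=
  S Ushift /\ S Ushift_inv /\
  (forall a, has_limits_pm a -> S (mult_op a)) /\
  (forall T1 T2, S T1 -> S T2 -> S (op_add T1 T2)) /\
  (forall c T, S T -> S (op_scal c T)) /\
  (forall T1 T2, S T1 -> S T2 -> S (op_comp T1 T2)) /\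
  (forall T, (forall eps, 0 < eps -> exists T0, S T0 /\ opdist_le (op_sub T T0) eps) -> S T).

(* A : the C*-algebra generated by U and the a(K) = the smallest norm-closed
   algebra containing U, U^{-1}=U^* and all a(K) (the generating set is *-closed). *)
Definition in_A (T : op) : Prop := forall S, closed_alg S -> S T.

(* Elements of the dense algebra \mathcal{A}: finite sums sum_m U^m a_m(K),
   given as a list of pairs (m, a_m) with each a_m eventually constant. *)
Definition calA_elem (l : list (Z * (Z -> C))) : op :=
  fun x k => List.fold_right (fun p acc => Cplus (Upow_mult (fst p) (snd p) x k) acc) (RtoC 0) l.

Definition calA_list (l : list (Z * (Z -> C))) : Prop :=
  List.Forall (fun p => eventually_const (snd p)) l.

Definition approx_inner (d : op -> op) : Prop :=
  exists X : nat -> op, (forall j, in_A (X j)) /\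
    forall l, calA_list l ->
      forall eps, 0 < eps -> exists N : nat, forall j, (N <= j)%nat ->
        opdist_le (op_sub (d (calA_elem l)) (commutator (X j) (calA_elem l))) eps.

Definition conv_increments (beta : Z -> C) : Prop :=
  has_limits_pm (fun k => Cminus (beta k) (beta (k - 1)%Z)).

Definition cov_derivation (n : Z) (beta : Z -> C) : op -> op :=
  fun a => commutator (Upow_mult n beta) a.

Definition increments_to_zero (beta : Z -> C) : Prop :=
  (forall eps, 0 < eps -> exists N : Z, forall k, (N <= k)%Z ->
      Cmod (Cminus (beta (k + 1)%Z) (beta k)) < eps) /\
  (forall eps, 0 < eps -> exists N : Z, forall k, (k <= N)%Z ->
      Cmod (Cminus (beta (k + 1)%Z) (beta k)) < eps).

From Stdlib Require Import Reals ZArith List Lra Lia FunctionalExtensionality.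
From Coquelicot Require Import Coquelicot.
Open Scope R_scope.

(* Every element of [A] is a norm limit of finite sums [sum_m U^m b_m(K)] whose coefficients
   [b_m] are bounded with increments tending to 0 at +-oo: such operators form a norm-closed
   algebra containing the generators.  The (k, k+n+1) matrix entry of
   [d(U) = [U^n beta(K), U]] is [beta(k+1) - beta(k)], while that of [[B, U]] for such a finite
   sum [B] is the increment of the n-th diagonal of [B], which tends to 0.  So if [[X_j, U]]
   approximates [d(U)], the increments of [beta] tend to 0.
   Conversely, if they do, take [X_j = U^n beta_j(K)] with [beta_j] the truncation of [beta] to
   [[-j, j]].  Then [d - [X_j, .] = [U^n g(K), .]] with [g = beta - beta_j], and for
   [a = U^m a(K)] with [a] eventually constant this commutator is [U^(n+m)] times the symbol
   [(g(i+m) - g(i)) a(i) + g(i) (a(i) - a(i+n))]: the first term is at most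
   [|m| sup_{|k| >= j} |beta(k+1) - beta(k)| sup |a|], the second vanishes for large [j]. *)

(* [sq_window x a len] is the sum of [|x k|^2] over [a <= k < a + len]; unlike the
   enumeration in [sq_terms], windows are compatible with shifts. *)
Fixpoint sq_window (x : vec) (a : Z) (len : nat) : R :=
  match len with
  | O => 0
  | S l => Cmod (x a) ^ 2 + sq_window x (a + 1)%Z l
  end.

Lemma sq_window_ge0 x a len : 0 <= sq_window x a len.
Proof.
  revert a; induction len as [|len IH]; intros a; simpl; [lra|].
  specialize (IH (a + 1)%Z). nra.
Qed.

Lemma sq_window_add_len x l1 l2 a :
  sq_window x a (l1 + l2) = sq_window x a l1 + sq_window x (a + Z.of_nat l1) l2.
Proof.
  revert a; induction l1 as [|l1 IH]; intros a; simpl.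
  - rewrite Z.add_0_r. lra.
  - rewrite IH. replace (a + 1 + Z.of_nat l1)%Z with (a + Z.pos (Pos.of_succ_nat l1))%Z by lia.
    lra.
Qed.

Lemma sq_window_le_sub x a len b L :
  (b <= a)%Z -> (a + Z.of_nat len <= b + Z.of_nat L)%Z ->
  sq_window x a len <= sq_window x b L.
Proof.
  intros Hba Hend.
  set (i := Z.to_nat (a - b)).
  replace L with (i + (len + (L - i - len)))%nat by (unfold i; lia).
  rewrite !sq_window_add_len.
  replace (b + Z.of_nat i)%Z with a by (unfold i; lia).
  pose proof (sq_window_ge0 x b i).
  pose proof (sq_window_ge0 x (a + Z.of_nat len) (L - i - len)). lra.
Qed.

Lemma sum_sq_terms_window x N :
  sum_n (sq_terms x) N = sq_window x (- Z.of_nat N - 1) (2 * N + 2).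
Proof.
  induction N as [|N IH].
  - rewrite sum_O. unfold sq_terms. simpl. ring.
  - replace (2 * S N + 2)%nat with (1 + ((2 * N + 2) + 1))%nat by lia.
    rewrite 2!sq_window_add_len, sum_Sn, IH. change (@plus _ ?u ?v) with (u + v).
    replace (- Z.of_nat (S N) - 1 + Z.of_nat 1)%Z with (- Z.of_nat N - 1)%Z by lia.
    replace (- Z.of_nat N - 1 + Z.of_nat (2 * N + 2))%Z with (Z.of_nat (S N)) by lia.
    unfold sq_terms. cbn [sq_window]. lra.
Qed.

Lemma sum_sq_terms_incr x n : sum_n (sq_terms x) n <= sum_n (sq_terms x) (S n).
Proof.
  rewrite sum_Sn. change (@plus _ ?u ?v) with (u + v).
  assert (0 <= sq_terms x (S n)) by (unfold sq_terms; nra). lra.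
Qed.

Lemma vnorm_ge0 x : 0 <= vnorm x.
Proof. apply sqrt_pos. Qed.

Lemma sq_window_le_vnorm x a len : l2 x -> sq_window x a len <= vnorm x ^ 2.
Proof.
  intros Hx.
  set (N := Z.to_nat (Z.abs a + Z.of_nat len)).
  assert (Hsub : sq_window x a len <= sum_n (sq_terms x) N).
  { rewrite sum_sq_terms_window. apply sq_window_le_sub; unfold N; lia. }
  pose proof (is_lim_seq_incr_compare _ _ (Series_correct _ Hx) (sum_sq_terms_incr x)) as Hlim.
  assert (H0 : 0 <= Series (sq_terms x)).
  { eapply Rle_trans; [|apply (Hlim N)]. eapply Rle_trans; [|exact Hsub]. apply sq_window_ge0. }
  unfold vnorm. rewrite pow2_sqrt by exact H0. eapply Rle_trans; [exact Hsub|apply Hlim].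
Qed.

Lemma l2_of_sq_window_le x M :
  0 <= M -> (forall a len, sq_window x a len <= M ^ 2) -> l2 x /\ vnorm x <= M.
Proof.
  intros HM HW.
  assert (Hb : forall n, sum_n (sq_terms x) n <= M ^ 2).
  { intros n. rewrite sum_sq_terms_window. apply HW. }
  destruct (ex_finite_lim_seq_incr _ _ (sum_sq_terms_incr x) Hb) as [s Hs].
  split; [exists s; exact Hs|].
  unfold vnorm. rewrite (is_series_unique _ _ Hs).
  pose proof (is_lim_seq_le _ _ _ _ Hb Hs (is_lim_seq_const (M ^ 2))) as Hle. simpl in Hle.
  rewrite <- (sqrt_pow2 M) by exact HM. apply sqrt_le_1_alt. exact Hle.
Qed.

Lemma sqrt_sum_sq_le s z p u q v :
  0 <= s -> s <= p + q -> 0 <= z -> z <= u + v ->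
  sqrt (s ^ 2 + z ^ 2) <= sqrt (p ^ 2 + u ^ 2) + sqrt (q ^ 2 + v ^ 2).
Proof.
  intros Hs Hspq Hz Hzuv.
  apply Rle_trans with (Cmod (Cplus (p, u) (q, v))); [|apply Cmod_triangle].
  unfold Cmod. simpl. apply sqrt_le_1_alt. nra.
Qed.

Lemma sqrt_sq_window_add x y a len :
  sqrt (sq_window (fun k => Cplus (x k) (y k)) a len)
  <= sqrt (sq_window x a len) + sqrt (sq_window y a len).
Proof.
  revert a; induction len as [|len IH]; intros a; simpl.
  - rewrite sqrt_0. lra.
  - rewrite <- (pow2_sqrt (sq_window x (a + 1)%Z len)) by apply sq_window_ge0.
    rewrite <- (pow2_sqrt (sq_window y (a + 1)%Z len)) by apply sq_window_ge0.
    rewrite <- (pow2_sqrt (sq_window _ (a + 1)%Z len)) by apply sq_window_ge0.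
    apply sqrt_sum_sq_le; auto using Cmod_ge_0, sqrt_pos, Cmod_triangle.
Qed.

Lemma l2_add x y : l2 x -> l2 y ->
  l2 (fun k => Cplus (x k) (y k)) /\ vnorm (fun k => Cplus (x k) (y k)) <= vnorm x + vnorm y.
Proof.
  intros Hx Hy. pose proof (vnorm_ge0 x). pose proof (vnorm_ge0 y).
  apply l2_of_sq_window_le; [lra|]. intros a len.
  assert (Hsq : forall w, l2 w -> sqrt (sq_window w a len) <= vnorm w).
  { intros w Hw. rewrite <- (sqrt_pow2 (vnorm w)) by apply vnorm_ge0.
    apply sqrt_le_1_alt. apply sq_window_le_vnorm; exact Hw. }
  rewrite <- (pow2_sqrt (sq_window _ a len)) by apply sq_window_ge0.
  apply pow_incr. split; [apply sqrt_pos|].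
  eapply Rle_trans; [apply sqrt_sq_window_add|]. pose proof (Hsq x Hx). pose proof (Hsq y Hy). lra.
Qed.

Lemma sq_window_shift x r a len :
  sq_window (fun k => x (k - r)%Z) a len = sq_window x (a - r) len.
Proof.
  revert a; induction len as [|len IH]; intros a; simpl; [reflexivity|].
  rewrite IH. replace (a + 1 - r)%Z with (a - r + 1)%Z by lia. reflexivity.
Qed.

Lemma sq_window_mult_le f x K a len : (forall k, Cmod (f k) <= K) ->
  sq_window (fun k => Cmult (f k) (x k)) a len <= K ^ 2 * sq_window x a len.
Proof.
  intros Hf. revert a; induction len as [|len IH]; intros a; simpl; [lra|].
  specialize (IH (a + 1)%Z). rewrite Cmod_mult.
  pose proof (Hf a). pose proof (Cmod_ge_0 (f a)). pose proof (Cmod_ge_0 (x a)).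
  assert (Cmod (f a) ^ 2 <= K ^ 2) by (apply pow_incr; lra).
  pose proof (pow2_ge_0 (Cmod (x a))). nra.
Qed.

Lemma Cmod_le_vnorm y k : l2 y -> Cmod (y k) <= vnorm y.
Proof.
  intros Hy. pose proof (sq_window_le_vnorm y k 1 Hy) as H. simpl in H.
  rewrite Rplus_0_r in H. pose proof (vnorm_ge0 y). pose proof (Cmod_ge_0 (y k)).
  rewrite <- (sqrt_pow2 (Cmod (y k))), <- (sqrt_pow2 (vnorm y)) by assumption.
  apply sqrt_le_1_alt. exact H.
Qed.

Lemma opdist_le_eq T T' c :
  (forall x k, T x k = T' x k) -> opdist_le T c -> opdist_le T' c.
Proof.
  intros HT H x Hx. replace (T' x) with (T x) by (extensionality k; apply HT). auto.
Qed.

Lemma opdist_le_weaken T c c' : c <= c' -> opdist_le T c -> opdist_le T c'.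
Proof.
  intros Hc H x Hx. destruct (H x Hx) as [Hl Hn]. split; [exact Hl|].
  pose proof (vnorm_ge0 x). nra.
Qed.

Lemma opdist_le_zero T c : 0 <= c -> (forall x k, T x k = RtoC 0) -> opdist_le T c.
Proof.
  intros Hc HT x _.
  apply l2_of_sq_window_le; [pose proof (vnorm_ge0 x); nra|]. intros a len.
  replace (sq_window (T x) a len) with 0; [apply pow2_ge_0|].
  revert a; induction len as [|len IH]; intros a; simpl; [reflexivity|].
  rewrite <- IH, HT, Cmod_0. ring.
Qed.

Lemma opdist_le_add T1 T2 c1 c2 :
  opdist_le T1 c1 -> opdist_le T2 c2 -> opdist_le (op_add T1 T2) (c1 + c2).
Proof.
  intros H1 H2 x Hx. destruct (H1 x Hx) as [Hl1 Hn1], (H2 x Hx) as [Hl2 Hn2].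
  destruct (l2_add _ _ Hl1 Hl2) as [Hl Hn]. split; [exact Hl|]. unfold op_add. lra.
Qed.

Lemma opdist_le_comp T1 T2 c1 c2 :
  0 <= c1 -> opdist_le T1 c1 -> opdist_le T2 c2 -> opdist_le (op_comp T1 T2) (c1 * c2).
Proof.
  intros Hc1 H1 H2 x Hx. destruct (H2 x Hx) as [Hl2 Hn2]. destruct (H1 _ Hl2) as [Hl1 Hn1].
  split; [exact Hl1|]. unfold op_comp. nra.
Qed.

Lemma opdist_le_Upow_mult r a K :
  (forall k, Cmod (a k) <= K) -> opdist_le (Upow_mult r a) K.
Proof.
  intros Ha x Hx.
  assert (HK : 0 <= K) by (eapply Rle_trans; [apply Cmod_ge_0|apply (Ha 0%Z)]).
  pose proof (vnorm_ge0 x).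
  apply l2_of_sq_window_le; [nra|]. intros b len. unfold Upow_mult.
  rewrite (sq_window_shift (fun k => Cmult (a k) (x k))).
  eapply Rle_trans; [apply sq_window_mult_le, Ha|].
  pose proof (sq_window_le_vnorm x (b - r)%Z len Hx). pose proof (pow2_ge_0 K). nra.
Qed.

Definition basis_vec (m : Z) : vec := fun i => if Z.eq_dec i m then RtoC 1 else RtoC 0.

Lemma sq_window_basis_vec_right m a len : (m < a)%Z -> sq_window (basis_vec m) a len = 0.
Proof.
  revert a; induction len as [|len IH]; intros a Ha; cbn [sq_window]; [reflexivity|].
  rewrite IH by lia. unfold basis_vec. destruct (Z.eq_dec a m); [lia|].
  rewrite Cmod_0. ring.
Qed.

Lemma l2_basis_vec m : l2 (basis_vec m) /\ vnorm (basis_vec m) <= 1.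
Proof.
  apply l2_of_sq_window_le; [lra|]. intros a len. rewrite pow1.
  revert a; induction len as [|len IH]; intros a; cbn [sq_window]; [lra|].
  unfold basis_vec at 1. destruct (Z.eq_dec a m) as [->|_].
  - rewrite sq_window_basis_vec_right, Cmod_1 by lia. lra.
  - rewrite Cmod_0. specialize (IH (a + 1)%Z). lra.
Qed.

Lemma entry_le_opdist T c m i : opdist_le T c -> Cmod (T (basis_vec m) i) <= c.
Proof.
  intros HT. destruct (l2_basis_vec m) as [Hl Hn]. destruct (HT _ Hl) as [HTl HTn].
  assert (Hone : vnorm (basis_vec m) = 1).
  { pose proof (Cmod_le_vnorm _ m Hl) as H. unfold basis_vec at 1 in H.
    destruct (Z.eq_dec m m) as [_|]; [|lia]. rewrite Cmod_1 in H. lra. }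
  rewrite Hone, Rmult_1_r in HTn. pose proof (Cmod_le_vnorm _ i HTl). lra.
Qed.

Definition bounded (a : Z -> C) : Prop := exists K, forall k, Cmod (a k) <= K.

Definition small_at_infty (f : Z -> R) : Prop :=
  forall eps, 0 < eps -> exists N : Z, forall k, (N <= Z.abs k)%Z -> f k < eps.

Lemma increments_to_zero_small a :
  increments_to_zero a <-> small_at_infty (fun k => Cmod (Cminus (a (k + 1)%Z) (a k))).
Proof.
  split.
  - intros [Hp Hm] eps Heps.
    destruct (Hp eps Heps) as [Np HNp], (Hm eps Heps) as [Nm HNm].
    exists (Z.max (Z.abs Np) (Z.abs Nm)). intros k Hk.
    destruct (Z_le_gt_dec 0 k); [apply HNp | apply HNm]; lia.
  - intros H. split; intros eps Heps; destruct (H eps Heps) as [N HN].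
    + exists (Z.abs N). intros k Hk. apply HN. lia.
    + exists (- Z.abs N)%Z. intros k Hk. apply HN. lia.
Qed.

Lemma small_at_infty_le f g : (forall k, f k <= g k) -> small_at_infty g -> small_at_infty f.
Proof.
  intros Hfg Hg eps Heps. destruct (Hg eps Heps) as [N HN].
  exists N. intros k Hk. specialize (HN k Hk). specialize (Hfg k). lra.
Qed.

Lemma small_at_infty_comb A B f g : 0 <= A -> 0 <= B ->
  small_at_infty f -> small_at_infty g -> small_at_infty (fun k => A * f k + B * g k).
Proof.
  intros HA HB Hf Hg eps Heps.
  assert (Hd : 0 < eps / (A + B + 1)) by (apply Rdiv_lt_0_compat; lra).
  destruct (Hf _ Hd) as [Nf HNf], (Hg _ Hd) as [Ng HNg].
  exists (Z.max Nf Ng). intros k Hk.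
  specialize (HNf k ltac:(lia)). specialize (HNg k ltac:(lia)).
  assert (Heq : eps = (A + B + 1) * (eps / (A + B + 1))) by (field; lra).
  rewrite Heq. nra.
Qed.

Lemma small_at_infty_shift f s : small_at_infty f -> small_at_infty (fun k => f (k + s)%Z).
Proof.
  intros Hf eps Heps. destruct (Hf eps Heps) as [N HN].
  exists (N + Z.abs s)%Z. intros k Hk. apply HN. lia.
Qed.

Lemma bounded_ge0 (a : Z -> C) K : (forall k, Cmod (a k) <= K) -> 0 <= K.
Proof. intros H. eapply Rle_trans; [apply Cmod_ge_0|apply (H 0%Z)]. Qed.

Lemma bounded_const c : bounded (fun _ => c).
Proof. exists (Cmod c). intros _. lra. Qed.

Lemma bounded_shift a s : bounded a -> bounded (fun k => a (k + s)%Z).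
Proof. intros [K HK]. exists K. intros k. apply HK. Qed.

Lemma bounded_mul a b : bounded a -> bounded b -> bounded (fun k => Cmult (a k) (b k)).
Proof.
  intros [Ka Ha] [Kb Hb]. exists (Ka * Kb). intros k. rewrite Cmod_mult.
  pose proof (bounded_ge0 _ _ Ha). pose proof (Cmod_ge_0 (b k)).
  specialize (Ha k). specialize (Hb k). nra.
Qed.

Lemma increments_to_zero_const c : increments_to_zero (fun _ => c).
Proof.
  apply increments_to_zero_small. intros eps Heps. exists 0%Z. intros k _.
  replace (Cminus c c) with (RtoC 0) by (unfold Cminus; ring). rewrite Cmod_0. exact Heps.
Qed.

Lemma increments_to_zero_shift a s : increments_to_zero a -> increments_to_zero (fun k => a (k + s)%Z).
Proof.
  rewrite !increments_to_zero_small. intros Ha.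
  apply (small_at_infty_shift _ s) in Ha. revert Ha. apply small_at_infty_le.
  intros k. replace (k + 1 + s)%Z with (k + s + 1)%Z by lia. lra.
Qed.

Lemma increments_to_zero_add a b : increments_to_zero a -> increments_to_zero b ->
  increments_to_zero (fun k => Cplus (a k) (b k)).
Proof.
  rewrite !increments_to_zero_small. intros Ha Hb.
  apply (small_at_infty_le _ (fun k => 1 * Cmod (Cminus (a (k + 1)%Z) (a k))
                                      + 1 * Cmod (Cminus (b (k + 1)%Z) (b k)))).
  - intros k. rewrite !Rmult_1_l. eapply Rle_trans; [|apply Cmod_triangle].
    right. f_equal. unfold Cminus. ring.
  - apply small_at_infty_comb; auto; lra.
Qed.

Lemma increments_to_zero_mul a b : bounded a -> bounded b ->
  increments_to_zero a -> increments_to_zero b ->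
  increments_to_zero (fun k => Cmult (a k) (b k)).
Proof.
  intros [Ka HKa] [Kb HKb]. rewrite !increments_to_zero_small. intros Ha Hb.
  apply (small_at_infty_le _ (fun k => Ka * Cmod (Cminus (b (k + 1)%Z) (b k))
                                      + Kb * Cmod (Cminus (a (k + 1)%Z) (a k)))).
  - intros k.
    replace (Cminus (Cmult (a (k + 1)%Z) (b (k + 1)%Z)) (Cmult (a k) (b k))) with
      (Cplus (Cmult (a (k + 1)%Z) (Cminus (b (k + 1)%Z) (b k)))
             (Cmult (b k) (Cminus (a (k + 1)%Z) (a k)))) by (unfold Cminus; ring).
    eapply Rle_trans; [apply Cmod_triangle|]. rewrite !Cmod_mult.
    apply Rplus_le_compat; apply Rmult_le_compat_r; auto using Cmod_ge_0.
  - apply small_at_infty_comb; eauto using bounded_ge0.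
Qed.

Lemma Cmod_sub_triangle a b c : Cmod (Cminus a c) <= Cmod (Cminus a b) + Cmod (Cminus b c).
Proof.
  replace (Cminus a c) with (Cplus (Cminus a b) (Cminus b c)) by (unfold Cminus; ring).
  apply Cmod_triangle.
Qed.

Lemma Cmod_sub_sym a b : Cmod (Cminus a b) = Cmod (Cminus b a).
Proof.
  replace (Cminus a b) with (Copp (Cminus b a)) by (unfold Cminus; ring). apply Cmod_opp.
Qed.

Lemma Cmod_le_sub a L : Cmod a <= Cmod (Cminus a L) + Cmod L.
Proof.
  replace a with (Cplus (Cminus a L) L) at 1 by (unfold Cminus; ring). apply Cmod_triangle.
Qed.

Lemma Z_interval_bound (f : Z -> R) a len :
  exists K, forall k, (a <= k < a + Z.of_nat len)%Z -> f k <= K.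
Proof.
  induction len as [|len [K HK]]; [exists 0; intros; lia|].
  exists (Rmax K (f (a + Z.of_nat len)%Z)). intros k Hk.
  destruct (Z.eq_dec k (a + Z.of_nat len)) as [->|Hne]; [apply Rmax_r|].
  eapply Rle_trans; [apply HK; lia|apply Rmax_l].
Qed.

Lemma has_limits_pm_bounded a : has_limits_pm a -> bounded a.
Proof.
  intros [[Lp Hp] [Lm Hm]].
  destruct (Hp 1 Rlt_0_1) as [Np HNp], (Hm 1 Rlt_0_1) as [Nm HNm].
  destruct (Z_interval_bound (fun k => Cmod (a k)) Nm (Z.to_nat (Np - Nm))) as [K HK].
  exists (Rmax K (Rmax (Cmod Lp + 1) (Cmod Lm + 1))). intros k.
  destruct (Z_le_gt_dec Np k) as [Hk|Hk]; [|destruct (Z_le_gt_dec k Nm) as [Hk'|Hk']].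
  - specialize (HNp k Hk). pose proof (Cmod_le_sub (a k) Lp).
    eapply Rle_trans; [|eapply Rle_trans; [apply Rmax_l|apply Rmax_r]]. lra.
  - specialize (HNm k Hk'). pose proof (Cmod_le_sub (a k) Lm).
    eapply Rle_trans; [|eapply Rle_trans; [apply Rmax_r|apply Rmax_r]]. lra.
  - eapply Rle_trans; [apply HK; lia|apply Rmax_l].
Qed.

Lemma has_limits_pm_increments_to_zero a : has_limits_pm a -> increments_to_zero a.
Proof.
  intros [[Lp Hp] [Lm Hm]]. split; intros eps Heps.
  - destruct (Hp (eps / 2)) as [N HN]; [lra|]. exists N. intros k Hk.
    eapply Rle_lt_trans; [apply (Cmod_sub_triangle _ Lp)|].
    rewrite (Cmod_sub_sym Lp). pose proof (HN (k + 1)%Z ltac:(lia)). pose proof (HN k Hk). lra.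
  - destruct (Hm (eps / 2)) as [N HN]; [lra|]. exists (N - 1)%Z. intros k Hk.
    eapply Rle_lt_trans; [apply (Cmod_sub_triangle _ Lm)|].
    rewrite (Cmod_sub_sym Lm). pose proof (HN (k + 1)%Z ltac:(lia)). pose proof (HN k ltac:(lia)). lra.
Qed.

Lemma eventually_const_has_limits_pm a : eventually_const a -> has_limits_pm a.
Proof.
  intros [k0 [Hp Hm]].
  assert (H0 : forall c, Cmod (Cminus c c) = 0).
  { intros c. replace (Cminus c c) with (RtoC 0) by (unfold Cminus; ring). apply Cmod_0. }
  split; [exists (a k0) | exists (a (- k0)%Z)]; intros eps Heps;
    [exists k0 | exists (- k0)%Z]; intros k Hk; [rewrite Hp | rewrite Hm]; auto; rewrite H0; exact Heps.
Qed.

(** * Approximation of [A] by finite sums with slowly varying coefficients *)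

Definition slowly_varying (a : Z -> C) : Prop := bounded a /\ increments_to_zero a.

Definition slowly_varying_list (l : list (Z * (Z -> C))) : Prop :=
  List.Forall (fun p => slowly_varying (snd p)) l.

Lemma calA_elem_nil x k : calA_elem nil x k = RtoC 0.
Proof. reflexivity. Qed.

Lemma calA_elem_cons p l x k :
  calA_elem (p :: l) x k = Cplus (Upow_mult (fst p) (snd p) x k) (calA_elem l x k).
Proof. reflexivity. Qed.

Lemma Upow_mult_add_vec r a x y k :
  Upow_mult r a (fun i => Cplus (x i) (y i)) k = Cplus (Upow_mult r a x k) (Upow_mult r a y k).
Proof. unfold Upow_mult. ring. Qed.

Lemma Upow_mult_sub_vec r a x y k :
  Upow_mult r a (fun i => Cminus (x i) (y i)) k = Cminus (Upow_mult r a x k) (Upow_mult r a y k).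
Proof. unfold Upow_mult, Cminus. ring. Qed.

Lemma calA_elem_sub_vec l x y k :
  calA_elem l (fun i => Cminus (x i) (y i)) k = Cminus (calA_elem l x k) (calA_elem l y k).
Proof.
  induction l as [|p l IH]; rewrite ?calA_elem_cons, ?calA_elem_nil.
  - unfold Cminus. ring.
  - rewrite IH, Upow_mult_sub_vec. unfold Cminus. ring.
Qed.

Lemma calA_elem_app l1 l2 x k :
  calA_elem (l1 ++ l2) x k = Cplus (calA_elem l1 x k) (calA_elem l2 x k).
Proof.
  induction l1 as [|p l1 IH]; simpl app; rewrite ?calA_elem_cons, ?calA_elem_nil.
  - ring.
  - rewrite IH. ring.
Qed.

Definition scal_list (c : C) (l : list (Z * (Z -> C))) : list (Z * (Z -> C)) :=
  map (fun p => (fst p, fun k => Cmult c (snd p k))) l.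

Lemma calA_elem_scal c l x k : calA_elem (scal_list c l) x k = Cmult c (calA_elem l x k).
Proof.
  induction l as [|p l IH]; simpl scal_list; rewrite ?calA_elem_cons, ?calA_elem_nil.
  - ring.
  - rewrite IH. unfold Upow_mult. simpl. ring.
Qed.

(* [U^r a(K) U^s b(K) = U^(r+s) a(K+s) b(K)] *)
Definition prod_list (l1 l2 : list (Z * (Z -> C))) : list (Z * (Z -> C)) :=
  flat_map (fun p => map (fun q =>
    ((fst p + fst q)%Z, fun i => Cmult (snd p (i + fst q)%Z) (snd q i))) l2) l1.

Lemma calA_elem_prod l1 l2 x k :
  calA_elem (prod_list l1 l2) x k = calA_elem l1 (calA_elem l2 x) k.
Proof.
  induction l1 as [|p l1 IH]; simpl prod_list; [reflexivity|].
  rewrite calA_elem_app, calA_elem_cons, IH. f_equal. clear IH.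
  induction l2 as [|q l2 IH]; simpl map; rewrite ?calA_elem_cons, ?calA_elem_nil.
  - unfold Upow_mult. rewrite calA_elem_nil. ring.
  - rewrite IH. unfold Upow_mult at 1 3. rewrite calA_elem_cons. unfold Upow_mult. simpl.
    replace (k - (fst p + fst q) + fst q)%Z with (k - fst p)%Z by lia.
    replace (k - fst p - fst q)%Z with (k - (fst p + fst q))%Z by lia. ring.
Qed.

Lemma slowly_varying_list_app l1 l2 :
  slowly_varying_list l1 -> slowly_varying_list l2 -> slowly_varying_list (l1 ++ l2).
Proof. intros. apply Forall_app. split; assumption. Qed.

Lemma slowly_varying_list_scal c l :
  slowly_varying_list l -> slowly_varying_list (scal_list c l).
Proof.
  intros H. apply Forall_map. eapply Forall_impl; [|exact H].
  intros [r a] [Hb Hi]. split.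
  - apply bounded_mul; auto using bounded_const.
  - apply increments_to_zero_mul; auto using bounded_const, increments_to_zero_const.
Qed.

Lemma slowly_varying_list_prod l1 l2 :
  slowly_varying_list l1 -> slowly_varying_list l2 -> slowly_varying_list (prod_list l1 l2).
Proof.
  intros H1 H2. induction H1 as [|p l1 [Hpb Hpi] _ IH]; [constructor|].
  apply Forall_app. split; [|exact IH].
  apply Forall_map. eapply Forall_impl; [|exact H2]. intros q [Hqb Hqi]. split.
  - apply bounded_mul; auto using bounded_shift.
  - apply increments_to_zero_mul; auto using bounded_shift, increments_to_zero_shift.
Qed.

Lemma calA_elem_opdist_le l :
  slowly_varying_list l -> exists K, 0 <= K /\ opdist_le (calA_elem l) K.
Proof.
  intros H. induction H as [|p l [[Kp HKp] _] _ [K [HK HlK]]].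
  - exists 0. split; [lra|]. apply opdist_le_zero; [lra|]. reflexivity.
  - exists (Kp + K). split; [pose proof (bounded_ge0 _ _ HKp); lra|].
    apply (opdist_le_add (Upow_mult (fst p) (snd p)) (calA_elem l)); auto.
    apply opdist_le_Upow_mult. exact HKp.
Qed.

Definition approximable (T : op) : Prop :=
  forall eps, 0 < eps -> exists l,
    slowly_varying_list l /\ opdist_le (op_sub T (calA_elem l)) eps.

Lemma approximable_Upow_mult r a : slowly_varying a -> approximable (Upow_mult r a).
Proof.
  intros Ha eps Heps. exists ((r, a) :: nil). split; [repeat constructor; apply Ha|].
  apply opdist_le_zero; [lra|]. intros x k.
  unfold op_sub. rewrite calA_elem_cons, calA_elem_nil. unfold Cminus. simpl. ring.
Qed.

Lemma approximable_add T1 T2 : approximable T1 -> approximable T2 -> approximable (op_add T1 T2).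
Proof.
  intros H1 H2 eps Heps.
  destruct (H1 (eps / 2)) as [l1 [Hl1 Hd1]]; [lra|].
  destruct (H2 (eps / 2)) as [l2 [Hl2 Hd2]]; [lra|].
  exists (l1 ++ l2). split; [apply slowly_varying_list_app; assumption|].
  replace eps with (eps / 2 + eps / 2) by lra.
  apply (opdist_le_eq (op_add (op_sub T1 (calA_elem l1)) (op_sub T2 (calA_elem l2)))).
  - intros x k. unfold op_add, op_sub. rewrite calA_elem_app. unfold Cminus. ring.
  - apply opdist_le_add; assumption.
Qed.

Lemma approximable_scal c T : approximable T -> approximable (op_scal c T).
Proof.
  intros H eps Heps. pose proof (Cmod_ge_0 c).
  destruct (H (eps / (Cmod c + 1))) as [l [Hl Hd]]; [apply Rdiv_lt_0_compat; lra|].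
  exists (scal_list c l). split; [apply slowly_varying_list_scal; assumption|].
  apply (opdist_le_weaken _ (Cmod c * (eps / (Cmod c + 1)))).
  { apply Rmult_le_reg_r with (Cmod c + 1); [lra|].
    replace (Cmod c * (eps / (Cmod c + 1)) * (Cmod c + 1)) with (Cmod c * eps) by (field; lra).
    nra. }
  apply (opdist_le_eq (op_comp (Upow_mult 0 (fun _ => c)) (op_sub T (calA_elem l)))).
  - intros x k. unfold op_comp, op_sub, op_scal, Upow_mult. rewrite calA_elem_scal, Z.sub_0_r.
    unfold Cminus. ring.
  - apply opdist_le_comp; auto. apply opdist_le_Upow_mult. intros _. lra.
Qed.

Lemma approximable_opdist_le T : approximable T -> exists K, 0 <= K /\ opdist_le T K.
Proof.
  intros H. destruct (H 1 Rlt_0_1) as [l [Hl Hd]].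
  destruct (calA_elem_opdist_le l Hl) as [K [HK HlK]].
  exists (1 + K). split; [lra|].
  apply (opdist_le_eq (op_add (op_sub T (calA_elem l)) (calA_elem l))).
  - intros x k. unfold op_add, op_sub, Cminus. ring.
  - apply opdist_le_add; assumption.
Qed.

Lemma approximable_comp T1 T2 : approximable T1 -> approximable T2 -> approximable (op_comp T1 T2).
Proof.
  intros H1 H2 eps Heps.
  destruct (approximable_opdist_le T2 H2) as [K2 [HK2 HT2]].
  destruct (H1 (eps / (2 * (K2 + 1)))) as [l1 [Hl1 Hd1]]; [apply Rdiv_lt_0_compat; lra|].
  destruct (calA_elem_opdist_le l1 Hl1) as [K1 [HK1 HB1]].
  destruct (H2 (eps / (2 * (K1 + 1)))) as [l2 [Hl2 Hd2]]; [apply Rdiv_lt_0_compat; lra|].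
  exists (prod_list l1 l2). split; [apply slowly_varying_list_prod; assumption|].
  (* [T1 T2 - B1 B2 = (T1 - B1) T2 + B1 (T2 - B2)] *)
  apply (opdist_le_weaken _ (eps / (2 * (K2 + 1)) * K2 + K1 * (eps / (2 * (K1 + 1))))).
  { assert (eps / (2 * (K2 + 1)) * K2 <= eps / 2).
    { apply Rmult_le_reg_r with (K2 + 1); [lra|].
      replace (eps / (2 * (K2 + 1)) * K2 * (K2 + 1)) with (K2 * eps / 2) by (field; lra). nra. }
    assert (K1 * (eps / (2 * (K1 + 1))) <= eps / 2).
    { apply Rmult_le_reg_r with (K1 + 1); [lra|].
      replace (K1 * (eps / (2 * (K1 + 1))) * (K1 + 1)) with (K1 * eps / 2) by (field; lra). nra. }
    lra. }
  apply (opdist_le_eq (op_add (op_comp (op_sub T1 (calA_elem l1)) T2)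
                              (op_comp (calA_elem l1) (op_sub T2 (calA_elem l2))))).
  - intros x k. unfold op_add, op_comp, op_sub. rewrite calA_elem_prod, calA_elem_sub_vec.
    unfold Cminus. ring.
  - apply opdist_le_add; apply opdist_le_comp; auto; apply Rlt_le, Rdiv_lt_0_compat; lra.
Qed.

Lemma approximable_closed T :
  (forall eps, 0 < eps -> exists T0, approximable T0 /\ opdist_le (op_sub T T0) eps) ->
  approximable T.
Proof.
  intros H eps Heps.
  destruct (H (eps / 2)) as [T0 [HT0 Hd0]]; [lra|].
  destruct (HT0 (eps / 2)) as [l [Hl Hd]]; [lra|].
  exists l. split; [exact Hl|]. replace eps with (eps / 2 + eps / 2) by lra.
  apply (opdist_le_eq (op_add (op_sub T T0) (op_sub T0 (calA_elem l)))).
  - intros x k. unfold op_add, op_sub, Cminus. ring.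
  - apply opdist_le_add; assumption.
Qed.

Lemma Ushift_Upow_mult : Ushift = Upow_mult 1 (fun _ => RtoC 1).
Proof. extensionality x; extensionality k. unfold Ushift, Upow_mult. now rewrite Cmult_1_l. Qed.

Lemma Ushift_inv_Upow_mult : Ushift_inv = Upow_mult (-1) (fun _ => RtoC 1).
Proof.
  extensionality x; extensionality k. unfold Ushift_inv, Upow_mult.
  replace (k - -1)%Z with (k + 1)%Z by lia. now rewrite Cmult_1_l.
Qed.

Lemma mult_op_Upow_mult a : mult_op a = Upow_mult 0 a.
Proof. extensionality x; extensionality k. unfold mult_op, Upow_mult. now rewrite Z.sub_0_r. Qed.

Lemma closed_alg_approximable : closed_alg approximable.
Proof.
  assert (Hone : slowly_varying (fun _ => RtoC 1))
    by (split; [apply bounded_const | apply increments_to_zero_const]).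
  repeat split.
  - rewrite Ushift_Upow_mult. apply approximable_Upow_mult, Hone.
  - rewrite Ushift_inv_Upow_mult. apply approximable_Upow_mult, Hone.
  - intros a Ha. rewrite mult_op_Upow_mult. apply approximable_Upow_mult.
    split; [apply has_limits_pm_bounded | apply has_limits_pm_increments_to_zero]; exact Ha.
  - apply approximable_add.
  - apply approximable_scal.
  - apply approximable_comp.
  - apply approximable_closed.
Qed.

Lemma in_A_approximable T : in_A T -> approximable T.
Proof. intros HT. apply HT, closed_alg_approximable. Qed.

(** * Necessity *)

Definition diagonal (l : list (Z * (Z -> C))) (r : Z) (k : Z) : C :=
  fold_right (fun p acc => Cplus (if Z.eq_dec (fst p) r then snd p k else RtoC 0) acc) (RtoC 0) l.

Lemma Upow_mult_basis_vec r a m : Upow_mult r a (basis_vec m) (m + r)%Z = a m.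
Proof.
  unfold Upow_mult, basis_vec. replace (m + r - r)%Z with m by lia.
  destruct (Z.eq_dec m m); [ring|lia].
Qed.

Lemma calA_elem_basis_vec l r m : calA_elem l (basis_vec m) (m + r)%Z = diagonal l r m.
Proof.
  induction l as [|p l IH]; [reflexivity|].
  rewrite calA_elem_cons, IH. simpl. f_equal.
  destruct (Z.eq_dec (fst p) r) as [<-|Hne]; [apply Upow_mult_basis_vec|].
  unfold Upow_mult, basis_vec. destruct (Z.eq_dec (m + r - fst p) m); [lia|ring].
Qed.

Lemma diagonal_increments_to_zero l r :
  slowly_varying_list l -> increments_to_zero (diagonal l r).
Proof.
  intros H. induction H as [|p l [_ Hp] _ IH]; [apply increments_to_zero_const|].
  apply (increments_to_zero_add (fun k => if Z.eq_dec (fst p) r then snd p k else RtoC 0));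
    [|exact IH].
  destruct (Z.eq_dec (fst p) r); [exact Hp|apply increments_to_zero_const].
Qed.

Lemma Ushift_basis_vec m : Ushift (basis_vec m) = basis_vec (m + 1).
Proof.
  extensionality i. unfold Ushift, basis_vec.
  destruct (Z.eq_dec (i - 1) m), (Z.eq_dec i (m + 1)); auto; lia.
Qed.

Lemma commutator_Ushift_entry T m i :
  commutator T Ushift (basis_vec m) (i + 1)%Z
  = Cminus (T (basis_vec (m + 1)) (i + 1)%Z) (T (basis_vec m) i).
Proof.
  unfold commutator, op_sub, op_comp. rewrite Ushift_basis_vec. unfold Ushift.
  now replace (i + 1 - 1)%Z with i by lia.
Qed.

Lemma Cmod_le_sub4 a u v p q :
  Cmod a <= Cmod (Cminus a (Cminus u v)) + Cmod (Cminus u p) + Cmod (Cminus v q)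
            + Cmod (Cminus p q).
Proof.
  replace a with (Cplus (Cplus (Cminus a (Cminus u v)) (Cminus u p))
                        (Cplus (Copp (Cminus v q)) (Cminus p q))) at 1
    by (unfold Cminus; ring).
  eapply Rle_trans; [apply Cmod_triangle|]. rewrite <- Cmod_opp with (x := Cminus v q).
  pose proof (Cmod_triangle (Cminus a (Cminus u v)) (Cminus u p)).
  pose proof (Cmod_triangle (Copp (Cminus v q)) (Cminus p q)). lra.
Qed.

(* Compare the (k, k+n+1) entries of [d(U)], [[X, U]] and [[B, U]]. *)
Lemma increment_le_diagonal_increment n beta X l e k :
  opdist_le (op_sub (cov_derivation n beta Ushift) (commutator X Ushift)) e ->
  opdist_le (op_sub X (calA_elem l)) e ->
  Cmod (Cminus (beta (k + 1)%Z) (beta k))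
  <= 3 * e + Cmod (Cminus (diagonal l n (k + 1)%Z) (diagonal l n k)).
Proof.
  intros Hd HX.
  pose proof (entry_le_opdist _ _ k (k + n + 1)%Z Hd) as Hd'.
  pose proof (entry_le_opdist _ _ (k + 1)%Z (k + 1 + n)%Z HX) as HX1.
  pose proof (entry_le_opdist _ _ k (k + n)%Z HX) as HX0.
  unfold op_sub in Hd', HX1, HX0. rewrite !calA_elem_basis_vec in HX1, HX0.
  unfold cov_derivation in Hd'. rewrite !commutator_Ushift_entry in Hd'.
  replace (k + n + 1)%Z with (k + 1 + n)%Z in Hd' by lia.
  rewrite !Upow_mult_basis_vec in Hd'.
  pose proof (Cmod_le_sub4 (Cminus (beta (k + 1)%Z) (beta k))
                (X (basis_vec (k + 1)) (k + 1 + n)%Z) (X (basis_vec k) (k + n)%Z)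
                (diagonal l n (k + 1)) (diagonal l n k)).
  lra.
Qed.

Lemma calA_elem_Ushift : calA_elem ((1%Z, fun _ => RtoC 1) :: nil) = Ushift.
Proof.
  rewrite Ushift_Upow_mult. extensionality x; extensionality k.
  rewrite calA_elem_cons, calA_elem_nil. apply Cplus_0_r.
Qed.

Lemma approx_inner_increments_to_zero n beta :
  approx_inner (cov_derivation n beta) -> increments_to_zero beta.
Proof.
  intros [X [HXA Hconv]]. apply increments_to_zero_small. intros eps Heps.
  assert (He : 0 < eps / 4) by lra.
  assert (HU : calA_list ((1%Z, fun _ => RtoC 1) :: nil)).
  { repeat constructor. exists 0%Z. split; reflexivity. }
  destruct (Hconv _ HU _ He) as [N HN]. specialize (HN N (le_n N)).
  rewrite calA_elem_Ushift in HN.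
  destruct (in_A_approximable _ (HXA N) _ He) as [l [Hl HXl]].
  destruct (proj1 (increments_to_zero_small _) (diagonal_increments_to_zero l n Hl) _ He)
    as [M HM].
  exists M. intros k Hk.
  pose proof (increment_le_diagonal_increment n beta (X N) l _ k HN HXl).
  specialize (HM k Hk). lra.
Qed.

(** * Sufficiency *)

Lemma Upow_mult_succ r a : Upow_mult (Z.succ r) a = op_comp Ushift (Upow_mult r a).
Proof.
  extensionality x; extensionality k. unfold op_comp, Ushift, Upow_mult.
  now replace (k - 1 - r)%Z with (k - Z.succ r)%Z by lia.
Qed.

Lemma Upow_mult_pred r a : Upow_mult (Z.pred r) a = op_comp Ushift_inv (Upow_mult r a).
Proof.
  extensionality x; extensionality k. unfold op_comp, Ushift_inv, Upow_mult.
  now replace (k + 1 - r)%Z with (k - Z.pred r)%Z by lia.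
Qed.

Lemma in_A_Upow_mult r a : has_limits_pm a -> in_A (Upow_mult r a).
Proof.
  intros Ha S [HU [HUi [Hmult [_ [_ [Hcomp _]]]]]].
  induction r as [|r IH|r IH] using Z.peano_ind.
  - rewrite <- mult_op_Upow_mult. apply Hmult, Ha.
  - rewrite Upow_mult_succ. apply Hcomp; assumption.
  - rewrite Upow_mult_pred. apply Hcomp; assumption.
Qed.

Definition truncation (beta : Z -> C) (J : Z) : Z -> C :=
  fun k => beta (Z.max (- J) (Z.min J k)).

Lemma truncation_eventually_const beta J : (0 <= J)%Z -> eventually_const (truncation beta J).
Proof.
  intros HJ. exists J. unfold truncation. split; intros k Hk; f_equal; lia.
Qed.

Lemma truncation_error_zero beta J i :
  (Z.abs i <= J)%Z -> Cminus (beta i) (truncation beta J i) = RtoC 0.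
Proof.
  intros Hi. unfold truncation. replace (Z.max (- J) (Z.min J i)) with i by lia.
  unfold Cminus. ring.
Qed.

Lemma truncation_error_increment beta J B : (0 <= J)%Z ->
  (forall k, (J <= Z.abs k)%Z -> Cmod (Cminus (beta (k + 1)%Z) (beta k)) <= B) -> 0 <= B ->
  forall k, Cmod (Cminus (Cminus (beta (k + 1)%Z) (truncation beta J (k + 1)%Z))
                         (Cminus (beta k) (truncation beta J k))) <= B.
Proof.
  intros HJ HB HB0 k. unfold truncation.
  assert (Hcases : (Z.max (- J) (Z.min J (k + 1)) = Z.max (- J) (Z.min J k) /\ J <= Z.abs k)%Z
                   \/ (Z.max (- J) (Z.min J (k + 1)) = k + 1 /\ Z.max (- J) (Z.min J k) = k)%Z)
    by lia.
  destruct Hcases as [[Heq Hk]|[Heq1 Heq0]].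
  - rewrite Heq. eapply Rle_trans; [|apply (HB k Hk)]. right. f_equal. unfold Cminus. ring.
  - rewrite Heq1, Heq0. replace (Cminus _ _) with (RtoC 0) by (unfold Cminus; ring).
    rewrite Cmod_0. exact HB0.
Qed.

Lemma increment_telescope (g : Z -> C) B :
  (forall k, Cmod (Cminus (g (k + 1)%Z) (g k)) <= B) ->
  forall m i, Cmod (Cminus (g (i + m)%Z) (g i)) <= IZR (Z.abs m) * B.
Proof.
  intros Hg.
  assert (Hnat : forall (p : nat) i, Cmod (Cminus (g (i + Z.of_nat p)%Z) (g i)) <= INR p * B).
  { induction p as [|p IH]; intros i.
    - rewrite Z.add_0_r. replace (Cminus (g i) (g i)) with (RtoC 0) by (unfold Cminus; ring).
      rewrite Cmod_0. simpl. lra.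
    - rewrite S_INR. eapply Rle_trans; [apply (Cmod_sub_triangle _ (g (i + Z.of_nat p)%Z))|].
      specialize (Hg (i + Z.of_nat p)%Z). specialize (IH i).
      replace (i + Z.of_nat p + 1)%Z with (i + Z.of_nat (S p))%Z in Hg by lia. lra. }
  intros m i. rewrite <- Nat2Z.inj_abs_nat, <- INR_IZR_INZ.
  destruct (Z_le_gt_dec 0 m).
  - replace (i + m)%Z with (i + Z.of_nat (Z.abs_nat m))%Z by lia. apply Hnat.
  - rewrite Cmod_sub_sym. pose proof (Hnat (Z.abs_nat m) (i + m)%Z) as H.
    replace (i + m + Z.of_nat (Z.abs_nat m))%Z with i in H by lia. exact H.
Qed.

Lemma commutator_Upow_mult n m g a x k :
  commutator (Upow_mult n g) (Upow_mult m a) x k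
  = Upow_mult (n + m) (fun i => Cminus (Cmult (g (i + m)%Z) (a i)) (Cmult (a (i + n)%Z) (g i))) x k.
Proof.
  unfold commutator, op_sub, op_comp, Upow_mult.
  replace (k - (n + m) + m)%Z with (k - n)%Z by lia.
  replace (k - (n + m) + n)%Z with (k - m)%Z by lia.
  replace (k - n - m)%Z with (k - (n + m))%Z by lia.
  replace (k - m - n)%Z with (k - (n + m))%Z by lia.
  unfold Cminus. ring.
Qed.

(* The commutator symbol is [(g(i+m) - g(i)) a(i) + g(i) (a(i) - a(i+n))]. *)
Lemma opdist_le_commutator_Upow_mult n m g a B K :
  (forall k, Cmod (Cminus (g (k + 1)%Z) (g k)) <= B) -> (forall k, Cmod (a k) <= K) ->
  (forall i, g i = RtoC 0 \/ a (i + n)%Z = a i) ->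
  opdist_le (commutator (Upow_mult n g) (Upow_mult m a)) (IZR (Z.abs m) * B * K).
Proof.
  intros Hg Ha Hga.
  eapply opdist_le_eq; [intros x k; symmetry; apply commutator_Upow_mult|].
  apply opdist_le_Upow_mult. intros i.
  replace (Cminus (Cmult (g (i + m)%Z) (a i)) (Cmult (a (i + n)%Z) (g i)))
    with (Cmult (Cminus (g (i + m)%Z) (g i)) (a i)).
  - rewrite Cmod_mult. apply Rmult_le_compat; auto using Cmod_ge_0, increment_telescope.
  - destruct (Hga i) as [Hz|Hz]; rewrite Hz; unfold Cminus; ring.
Qed.

Definition opnorm_tends_to_zero (T : nat -> op) : Prop :=
  forall eps, 0 < eps -> exists N : nat, forall j, (N <= j)%nat -> opdist_le (T j) eps.

Lemma commutator_truncation_error_to_zero n beta m a :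
  increments_to_zero beta -> eventually_const a ->
  opnorm_tends_to_zero (fun j => commutator
    (Upow_mult n (fun k => Cminus (beta k) (truncation beta (Z.of_nat j) k))) (Upow_mult m a)).
Proof.
  intros Hbeta Ha eps Heps.
  destruct (has_limits_pm_bounded _ (eventually_const_has_limits_pm _ Ha)) as [K HK].
  pose proof (bounded_ge0 _ _ HK) as HK0.
  pose proof (IZR_le _ _ (Z.abs_nonneg m)) as Hm0.
  set (B := eps / ((IZR (Z.abs m) + 1) * (K + 1))).
  assert (HB : B * ((IZR (Z.abs m) + 1) * (K + 1)) = eps) by (unfold B; field; nra).
  assert (HB0 : 0 < B) by (unfold B; apply Rdiv_lt_0_compat; nra).
  destruct (proj1 (increments_to_zero_small _) Hbeta B HB0) as [N0 HN0].
  destruct Ha as [k0 [Hk0p Hk0m]].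
  exists (Z.to_nat (Z.max N0 (Z.abs k0 + Z.abs n))). intros j Hj.
  apply (opdist_le_weaken _ (IZR (Z.abs m) * B * K)); [nra|].
  apply opdist_le_commutator_Upow_mult; [|exact HK|].
  - apply truncation_error_increment; [lia| |lra].
    intros k Hk. apply Rlt_le, HN0. lia.
  - intros i. destruct (Z_le_gt_dec (Z.abs i) (Z.of_nat j)).
    + left. apply truncation_error_zero. exact l.
    + right. destruct (Z_le_gt_dec 0 i).
      * rewrite Hk0p, (Hk0p i) by lia. reflexivity.
      * rewrite Hk0m, (Hk0m i) by lia. reflexivity.
Qed.

Lemma commutator_calA_elem_to_zero n (G : nat -> Z -> C) :
  (forall m a, eventually_const a ->
     opnorm_tends_to_zero (fun j => commutator (Upow_mult n (G j)) (Upow_mult m a))) ->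
  forall l, calA_list l ->
  opnorm_tends_to_zero (fun j => commutator (Upow_mult n (G j)) (calA_elem l)).
Proof.
  intros Hterm l Hl. induction Hl as [|p l Hp _ IH]; intros eps Heps.
  - exists 0%nat. intros j _. apply opdist_le_zero; [lra|]. intros x k.
    unfold commutator, op_sub, op_comp, Upow_mult. rewrite !calA_elem_nil. unfold Cminus. ring.
  - destruct (Hterm (fst p) (snd p) Hp (eps / 2)) as [N1 H1]; [lra|].
    destruct (IH (eps / 2)) as [N2 H2]; [lra|].
    exists (Nat.max N1 N2). intros j Hj. replace eps with (eps / 2 + eps / 2) by lra.
    apply (opdist_le_eq (op_add (commutator (Upow_mult n (G j)) (Upow_mult (fst p) (snd p)))
                                (commutator (Upow_mult n (G j)) (calA_elem l)))).
    + intros x k. unfold op_add, commutator, op_sub, op_comp.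
      change (calA_elem (p :: l) x) with (fun i => Cplus (Upow_mult (fst p) (snd p) x i) (calA_elem l x i)).
      rewrite Upow_mult_add_vec, calA_elem_cons. unfold Cminus. ring.
    + apply opdist_le_add; [apply H1 | apply H2]; lia.
Qed.

Lemma commutator_Upow_mult_sub n b c l x k :
  op_sub (commutator (Upow_mult n b) (calA_elem l)) (commutator (Upow_mult n c) (calA_elem l)) x k
  = commutator (Upow_mult n (fun i => Cminus (b i) (c i))) (calA_elem l) x k.
Proof.
  unfold commutator, op_comp, op_sub. cbv beta.
  replace (Upow_mult n (fun i => Cminus (b i) (c i)) x)
    with (fun i => Cminus (Upow_mult n b x i) (Upow_mult n c x i))
    by (extensionality i; unfold Upow_mult, Cminus; ring).
  rewrite calA_elem_sub_vec. unfold Upow_mult, Cminus. ring.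
Qed.

Lemma increments_to_zero_approx_inner n beta :
  increments_to_zero beta -> approx_inner (cov_derivation n beta).
Proof.
  intros Hbeta. exists (fun j => Upow_mult n (truncation beta (Z.of_nat j))). split.
  - intros j. apply in_A_Upow_mult, eventually_const_has_limits_pm, truncation_eventually_const.
    lia.
  - intros l Hl eps Heps.
    destruct (commutator_calA_elem_to_zero n _
                (fun m a => commutator_truncation_error_to_zero n beta m a Hbeta) l Hl eps Heps)
      as [N HN].
    exists N. intros j Hj. eapply opdist_le_eq; [|apply (HN j Hj)].
    intros x k. symmetry. apply commutator_Upow_mult_sub.
Qed.

(* The hypothesis [conv_increments beta] only ensures that [d] maps into [A]; neither
   direction of the equivalence uses it. *)
Theorem mainTheorem10 (n : Z) (beta : Z -> C) :
  conv_increments beta ->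
  (approx_inner (cov_derivation n beta) <-> increments_to_zero beta).
Proof.
  intros _. split.
  - apply approx_inner_increments_to_zero.
  - apply increments_to_zero_approx_inner.
Qed.
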